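(* Let $\alpha_1,\alpha_2,\beta_2,\beta_3,\beta_4,\delta_1,\delta_2,\delta_4$ be positive real constants, let $i_M>0$, and let $i\in C(\mathbb{R}_+,[0,i_M])$, where $\mathbb{R}_+=[0,\infty)$. Consider the system $$u_1'=u_1(1-u_1-\alpha_1u_2-\delta_1u_3),\qquad u_2'=\beta_2u_2(1-u_2-\alpha_2u_1-\delta_2u_4),$$ $$u_3'=\beta_3(u_2-u_3),\qquad u_4'=\beta_4\big(i(t)-u_4-\delta_4u_4u_2\big).$$ If $\mathbf{u}(0)=(u_1(0),u_2(0),u_3(0),u_4(0))\in\mathbb{R}_+^4$, then this system has a unique solution $\mathbf{u}$ defined for all $t\in\mathbb{R}_+$, and it satisfies $\mathbf{u}(t)\in\mathbb{R}_+^4$ for all $t\in\mathbb{R}_+$.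
   Context: This is a non-dimensionalised model of normal cell density $u_1$, tumour cell density $u_2$, excess acid concentration $u_3$ and chemotherapy drug concentration $u_4$, with drug infusion rate $i(t)$; $'$ denotes $d/dt$. *)

From Stdlib Require Import Reals.
From Coquelicot Require Import Coquelicot.
Open Scope R_scope.

Definition Rplus_set (t : R) : Prop := 0 <= t.

Definition cont_on_Rplus (f : R -> R) : Prop :=
  forall t, 0 <= t -> filterlim f (within Rplus_set (locally t)) (locally (f t)).

Definition admissible_infusion (iM : R) (i : R -> R) : Prop :=
  cont_on_Rplus i /\ forall t, 0 <= t -> 0 <= i t <= iM.

(* (u1,u2,u3,u4) is a (classical, C^1 on R_+) solution of the system on R_+
   with initial datum (a1,a2,a3,a4): each component is continuous on R_+,
   differentiable on (0,+oo) with the prescribed derivative (the one-sided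
   derivative at 0 then follows from continuity of the right-hand side). *)
Definition is_solution
    (al1 al2 be2 be3 be4 de1 de2 de4 : R) (i : R -> R)
    (a1 a2 a3 a4 : R) (u1 u2 u3 u4 : R -> R) : Prop :=
  u1 0 = a1 /\ u2 0 = a2 /\ u3 0 = a3 /\ u4 0 = a4 /\
  cont_on_Rplus u1 /\ cont_on_Rplus u2 /\ cont_on_Rplus u3 /\ cont_on_Rplus u4 /\
  forall t, 0 < t ->
    is_derive u1 t (u1 t * (1 - u1 t - al1 * u2 t - de1 * u3 t)) /\
    is_derive u2 t (be2 * u2 t * (1 - u2 t - al2 * u1 t - de2 * u4 t)) /\
    is_derive u3 t (be3 * (u2 t - u3 t)) /\
    is_derive u4 t (be4 * (i t - u4 t - de4 * u4 t * u2 t)).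

(* Outside a box [0, M] the state is frozen at its nearest point in the box, and the
   infusion is extended to negative times by i(0).  The modified field is bounded and
   globally Lipschitz, so Picard iteration, a contraction by 1/2 for an exponentially
   weighted sup norm, converges on the whole half-line.  The box is taken above the initial
   data with M1, M2 >= 1, M3 >= M2 and M4 >= i_M, so that the field points into it on every
   face; a barrier argument keeps the solution in the box, where the modification is
   invisible, and this is a nonnegative global solution of the original system.  Two
   solutions are bounded on every [0, T], where the field is Lipschitz, and Gronwall's
   inequality for their squared distance makes them coincide. *)

From Stdlib Require Import Reals Lra Lia Psatz.
From Coquelicot Require Import Coquelicot.
Open Scope R_scope.

(** * Finite sums and the l1 distance *)

Fixpoint sum_lt (n : nat) (f : nat -> R) : R :=
  match n with
  | O => 0
  | S m => sum_lt m f + f m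
  end.

Lemma sum_lt_le n (f g : nat -> R) :
  (forall k, (k < n)%nat -> f k <= g k) -> sum_lt n f <= sum_lt n g.
Proof.
  induction n as [|n IH]; intros Hfg; simpl; [lra|].
  pose proof (Hfg n ltac:(lia)). assert (sum_lt n f <= sum_lt n g) by (apply IH; auto).
  lra.
Qed.

Lemma sum_lt_nonneg n (f : nat -> R) :
  (forall k, (k < n)%nat -> 0 <= f k) -> 0 <= sum_lt n f.
Proof.
  intros Hf. replace 0 with (sum_lt n (fun _ => 0)).
  - apply sum_lt_le. exact Hf.
  - induction n; simpl; [reflexivity|]. rewrite IHn by auto. ring.
Qed.

Lemma le_sum_lt n (f : nat -> R) k :
  (forall k, (k < n)%nat -> 0 <= f k) -> (k < n)%nat -> f k <= sum_lt n f.
Proof.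
  induction n as [|n IH]; intros Hf Hk; simpl; [lia|].
  assert (0 <= sum_lt n f) by (apply sum_lt_nonneg; auto).
  destruct (Nat.eq_dec k n) as [->|Hkn]; [lra|].
  pose proof (Hf n ltac:(lia)). assert (f k <= sum_lt n f) by (apply IH; auto; lia). lra.
Qed.

Lemma sum_lt_const n c : sum_lt n (fun _ => c) = INR n * c.
Proof. induction n as [|n IH]; simpl sum_lt; [simpl; ring|]. rewrite IH, S_INR. ring. Qed.

Lemma sum_lt_scal_l n c (f : nat -> R) : sum_lt n (fun k => c * f k) = c * sum_lt n f.
Proof. induction n as [|n IH]; simpl; [ring|]. rewrite IH. ring. Qed.

Lemma sum_lt_abs_sqr n (a : nat -> R) :
  sum_lt n (fun k => Rabs (a k)) ^ 2 <= INR n * sum_lt n (fun k => a k ^ 2).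
Proof.
  induction n as [|n IH]; cbn [sum_lt]; [simpl; lra|]. rewrite S_INR.
  set (s := sum_lt n (fun k => Rabs (a k))) in *.
  set (Q := sum_lt n (fun k => a k ^ 2)) in *.
  assert (HQ : 0 <= Q) by (apply sum_lt_nonneg; intros; apply pow2_ge_0).
  assert (Hs : 0 <= s) by (apply sum_lt_nonneg; intros; apply Rabs_pos).
  pose proof (pos_INR n). rewrite <- (pow2_abs (a n)).
  set (b := Rabs (a n)). assert (0 <= b) by apply Rabs_pos.
  assert (Hcross : 2 * s * b <= Q + INR n * b ^ 2).
  { destruct (Req_dec (INR n) 0) as [E|E].
    - rewrite E in IH. assert (s = 0) by nra. subst s. nra.
    - assert (0 < INR n) by lra. pose proof (pow2_ge_0 (s - INR n * b)).
      apply Rmult_le_reg_l with (INR n); [lra|]. nra. }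
  nra.
Qed.

Lemma continuous_sum_lt n (f : nat -> R -> R) z :
  (forall k, (k < n)%nat -> continuous (f k) z) ->
  continuous (fun t => sum_lt n (fun k => f k t)) z.
Proof.
  induction n as [|n IH]; intros Hf; simpl.
  - apply continuous_const.
  - apply (continuous_plus (fun t => sum_lt n (fun k => f k t)) (f n)).
    + apply IH. auto.
    + apply Hf. lia.
Qed.

Lemma is_derive_sum_lt n (f : nat -> R -> R) (df : nat -> R) x :
  (forall k, (k < n)%nat -> is_derive (f k) x (df k)) ->
  is_derive (fun t => sum_lt n (fun k => f k t)) x (sum_lt n df).
Proof.
  induction n as [|n IH]; intros Hf; simpl.
  - apply (is_derive_const 0).
  - apply (is_derive_plus (fun t => sum_lt n (fun k => f k t)) (f n)).
    + apply IH. auto.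
    + apply Hf. lia.
Qed.

(* A point of R^n is a function [nat -> R] whose entries from [n] on are ignored. *)
Definition l1_dist (n : nat) (x y : nat -> R) : R :=
  sum_lt n (fun k => Rabs (x k - y k)).

Lemma l1_dist_nonneg n x y : 0 <= l1_dist n x y.
Proof. apply sum_lt_nonneg. intros; apply Rabs_pos. Qed.

Lemma Rabs_sub_le_l1_dist n x y k : (k < n)%nat -> Rabs (x k - y k) <= l1_dist n x y.
Proof. apply (le_sum_lt n (fun k => Rabs (x k - y k))). intros; apply Rabs_pos. Qed.

Lemma l1_dist_le n x y b :
  (forall k, (k < n)%nat -> Rabs (x k - y k) <= b) -> l1_dist n x y <= INR n * b.
Proof. intros H. rewrite <- sum_lt_const. apply sum_lt_le. exact H. Qed.

Lemma l1_dist_diag n x : l1_dist n x x = 0.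
Proof.
  induction n as [|n IH]; [reflexivity|]. cbn [l1_dist sum_lt]. unfold l1_dist in IH.
  rewrite IH, Rminus_diag, Rabs_R0. ring.
Qed.

Lemma continuous_l1_dist n (p q : nat -> R -> R) z :
  (forall k, (k < n)%nat -> continuous (p k) z /\ continuous (q k) z) ->
  continuous (fun s => l1_dist n (fun k => p k s) (fun k => q k s)) z.
Proof.
  intros Hpq. apply (continuous_sum_lt n (fun k s => Rabs (p k s - q k s))).
  intros k Hk. apply continuous_Rabs_comp. destruct (Hpq k Hk) as [Hp Hq].
  apply (continuous_minus (p k) (q k)); assumption.
Qed.

Lemma Rabs_mul_sub_le a b a' b' K :
  Rabs a <= K -> Rabs b' <= K -> Rabs (a * b - a' * b') <= K * (Rabs (a - a') + Rabs (b - b')).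
Proof.
  intros Ha Hb.
  replace (a * b - a' * b') with (a * (b - b') + b' * (a - a')) by ring.
  eapply Rle_trans; [apply Rabs_triang|]. rewrite !Rabs_mult.
  pose proof (Rabs_pos (b - b')). pose proof (Rabs_pos (a - a')).
  pose proof (Rabs_pos a). pose proof (Rabs_pos b'). nra.
Qed.

Lemma Rabs_scal_le c q b : 0 <= c -> Rabs q <= b -> Rabs (c * q) <= c * b.
Proof.
  intros Hc Hq. rewrite Rabs_mult, Rabs_pos_eq by exact Hc. apply Rmult_le_compat_l; assumption.
Qed.

Lemma Rabs_sum4_le t1 t2 t3 t4 b1 b2 b3 b4 :
  Rabs t1 <= b1 -> Rabs t2 <= b2 -> Rabs t3 <= b3 -> Rabs t4 <= b4 ->
  Rabs (t1 + t2 + t3 + t4) <= b1 + b2 + b3 + b4.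
Proof.
  intros H1 H2 H3 H4. apply Rabs_le_between in H1, H2, H3, H4. apply Rabs_le. lra.
Qed.

Lemma Rabs_mul_sub_le_l1_dist n x y K k l :
  (k < n)%nat -> (l < n)%nat -> (forall i, (i < n)%nat -> Rabs (x i) <= K /\ Rabs (y i) <= K) ->
  Rabs (x k * x l - y k * y l) <= 2 * K * l1_dist n x y.
Proof.
  intros Hk Hl Hxy. eapply Rle_trans; [apply Rabs_mul_sub_le; [apply Hxy, Hk|apply Hxy, Hl]|].
  pose proof (Rabs_sub_le_l1_dist n x y k Hk). pose proof (Rabs_sub_le_l1_dist n x y l Hl).
  assert (0 <= K) by (pose proof (Rabs_pos (x k)); pose proof (Hxy k Hk); lra). nra.
Qed.

(** * Real analysis on the half-line *)

Lemma continuous_of_dominated (f g : R -> R) z :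
  (forall s, Rabs (f s - f z) <= g s) -> continuous g z -> g z = 0 -> continuous f z.
Proof.
  intros Hfg Hg Hz. apply filterlim_locally. intros eps.
  generalize (proj1 (filterlim_locally _ _) Hg eps). apply filter_imp.
  intros s Hs. change (Rabs (g s - g z) < eps) in Hs. change (Rabs (f s - f z) < eps).
  rewrite Hz, Rminus_0_r in Hs.
  eapply Rle_lt_trans; [apply Hfg|]. eapply Rle_lt_trans; [apply Rle_abs|exact Hs].
Qed.

Lemma continuous_of_lipschitz (f : R -> R) B z :
  (forall x y, Rabs (f x - f y) <= B * Rabs (x - y)) -> continuous f z.
Proof.
  intros Hf. apply (continuous_of_dominated f (fun s => B * Rabs (s - z))).
  - intros s. apply Hf.
  - apply (continuous_scal_r B (fun s => Rabs (s - z))). apply continuous_Rabs_comp.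
    apply (continuous_minus (fun s => s) (fun _ => z));
      [apply continuous_id|apply continuous_const].
  - rewrite Rminus_diag, Rabs_R0. ring.
Qed.

Lemma Rabs_Rmax0_sub_le x y : Rabs (Rmax 0 x - Rmax 0 y) <= Rabs (x - y).
Proof.
  unfold Rmax; destruct (Rle_dec 0 x), (Rle_dec 0 y); unfold Rabs; repeat destruct Rcase_abs; lra.
Qed.

Lemma continuous_Rmax0_comp (f : R -> R) x :
  cont_on_Rplus f -> continuous (fun t => f (Rmax 0 t)) x.
Proof.
  intros Hf. apply filterlim_comp with (G := within Rplus_set (locally (Rmax 0 x))).
  - intros P [eps HP]. exists eps. intros y Hy. apply HP; [|apply Rmax_l].
    eapply Rle_lt_trans; [apply Rabs_Rmax0_sub_le|exact Hy].
  - apply Hf. apply Rmax_l.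
Qed.

Lemma cont_on_Rplus_of_continuous (f : R -> R) : (forall x, continuous f x) -> cont_on_Rplus f.
Proof. intros Hf t _. eapply filterlim_filter_le_1; [apply filter_le_within|apply Hf]. Qed.

Lemma is_derive_Rmax0_comp (f : R -> R) x l :
  0 < x -> is_derive f x l -> is_derive (fun t => f (Rmax 0 t)) x l.
Proof.
  intros Hx Hf. apply (is_derive_ext_loc f); [|exact Hf].
  exists (mkposreal x Hx). intros y Hy. change (Rabs (y - x) < x) in Hy.
  apply Rabs_def2 in Hy. rewrite Rmax_right by lra. reflexivity.
Qed.

Lemma le_of_deriv_nonpos (f df : R -> R) a b :
  a < b -> (forall c, a <= c <= b -> continuous f c) ->
  (forall c, a < c < b -> is_derive f c (df c) /\ df c <= 0) -> f b <= f a.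
Proof.
  intros Hab Hc Hd.
  assert (pr : forall c, a < c < b -> derivable_pt f c).
  { intros c Hc'. exists (df c). apply is_derive_Reals, Hd, Hc'. }
  destruct (MVT f id a b pr (fun c _ => derivable_pt_id c) Hab
              (fun c Hc' => proj2 (continuity_pt_filterlim f c) (Hc c Hc'))
              (fun c _ => derivable_continuous_pt _ _ (derivable_pt_id c))) as [c [Hc' HM]].
  rewrite (derive_pt_eq_0 f c (df c) (pr c Hc')) in HM by (apply is_derive_Reals, Hd, Hc').
  rewrite (derive_pt_eq_0 id c 1 _ (derivable_pt_lim_id c)) in HM. unfold id in HM.
  destruct (Hd c Hc') as [_ Hneg]. nra.
Qed.

Lemma barrier_le (f df : R -> R) T M :
  (forall x, continuous f x) -> (forall x, 0 < x < T -> is_derive f x (df x)) ->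
  f 0 <= M -> (forall x, 0 < x < T -> M < f x -> df x <= 0) ->
  forall t, 0 <= t <= T -> f t <= M.
Proof.
  intros Hc Hd H0 Hdown t Ht.
  destruct (Rle_or_lt (f t) M) as [|Hft]; [assumption|exfalso].
  set (E := fun r => 0 <= r <= t /\ f r <= M).
  destruct (completeness E) as [s [Hub Hlub]].
  { exists t. intros r [Hr _]. lra. }
  { exists 0. split; [lra|exact H0]. }
  assert (Hs0 : 0 <= s) by (apply Hub; split; [lra|exact H0]).
  assert (Hst : s <= t) by (apply Hlub; intros r [Hr _]; lra).
  assert (Hfs : f s <= M).
  { destruct (Rle_or_lt (f s) M) as [|Hfs]; [assumption|exfalso].
    assert (Hp : 0 < f s - M) by lra.
    destruct (proj1 (filterlim_locally _ _) (Hc s) (mkposreal _ Hp)) as [d Hnear].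
    assert (Hup : is_upper_bound E (s - d)).
    { intros r [Hr Hfr]. destruct (Rle_or_lt r (s - d)) as [|Hlt]; [assumption|exfalso].
      assert (r <= s) by (apply Hub; split; assumption).
      assert (Hball : Rabs (r - s) < d) by (rewrite Rabs_left1 by lra; lra).
      specialize (Hnear r Hball). change (Rabs (f r - f s) < f s - M) in Hnear.
      apply Rabs_def2 in Hnear. lra. }
    specialize (Hlub _ Hup). pose proof (cond_pos d). lra. }
  assert (Hst' : s < t) by (destruct (Req_dec s t); [subst; lra|lra]).
  assert (Habove : forall r, s < r <= t -> M < f r).
  { intros r Hr. destruct (Rle_or_lt (f r) M) as [Hfr|]; [exfalso|assumption].
    assert (r <= s) by (apply Hub; split; [lra|exact Hfr]). lra. }
  assert (f t <= f s); [|lra].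
  apply (le_of_deriv_nonpos f df s t Hst'); [intros; apply Hc|].
  intros c Hcst. split; [apply Hd; lra|]. apply Hdown; [lra|]. apply Habove; lra.
Qed.

Lemma interval_invariant (f df : R -> R) M :
  (forall x, continuous f x) -> (forall x, 0 < x -> is_derive f x (df x)) ->
  0 <= f 0 <= M ->
  (forall x, 0 < x -> M < f x -> df x <= 0) -> (forall x, 0 < x -> f x < 0 -> 0 <= df x) ->
  forall t, 0 <= t -> 0 <= f t <= M.
Proof.
  intros Hc Hd H0 Hdown Hup t Ht. split.
  - assert (- f t <= 0); [|lra].
    apply (barrier_le (fun x => - f x) (fun x => - df x) (t + 1)); [| |lra| |lra].
    + intros x. apply (continuous_opp f), Hc.
    + intros x Hx. apply (is_derive_opp f), Hd. lra.
    + intros x Hx Hfx. assert (0 <= df x) by (apply Hup; lra). lra.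
  - apply (barrier_le f df (t + 1)); [exact Hc| |lra| |lra].
    + intros x Hx. apply Hd. lra.
    + intros x Hx Hfx. apply Hdown; lra.
Qed.

Lemma gronwall_nonpos (E dE : R -> R) c T :
  (forall x, continuous E x) -> (forall x, 0 < x < T -> is_derive E x (dE x)) ->
  (forall x, 0 < x < T -> dE x <= c * E x) -> E 0 <= 0 ->
  forall t, 0 <= t <= T -> E t <= 0.
Proof.
  intros Hc Hd Hgrowth H0 t Ht.
  set (H := fun x => exp (- c * x) * E x).
  assert (Hexp : forall x, is_derive (fun y => exp (- c * y)) x (- c * exp (- c * x))).
  { intros x. auto_derive; [auto|ring]. }
  assert (HHt : H t <= 0).
  { refine (barrier_le H (fun x => exp (- c * x) * (dE x - c * E x)) T 0 _ _ _ _ t Ht).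
    - intros x. apply (continuous_mult (fun y => exp (- c * y)) E); [|apply Hc].
      apply (ex_derive_continuous (V := R_NormedModule)). eexists. apply Hexp.
    - intros x Hx.
      pose proof (is_derive_mult (fun y => exp (- c * y)) E x _ _ (Hexp x) (Hd x Hx) Rmult_comm)
        as D.
      replace (exp (- c * x) * (dE x - c * E x))
        with (- c * exp (- c * x) * E x + exp (- c * x) * dE x) by ring.
      exact D.
    - unfold H. rewrite Rmult_0_r, exp_0. lra.
    - intros x Hx _. pose proof (exp_pos (- c * x)). pose proof (Hgrowth x Hx). nra. }
  unfold H in HHt. pose proof (exp_pos (- c * t)). nra.
Qed.

Lemma bounded_on_interval (f : R -> R) T :
  0 <= T -> (forall x, continuous f x) -> exists K, forall x, 0 <= x <= T -> Rabs (f x) <= K.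
Proof.
  intros HT Hc.
  assert (Hcpt : forall x, 0 <= x <= T -> continuity_pt f x).
  { intros x _. apply continuity_pt_filterlim, Hc. }
  destruct (continuity_ab_maj f 0 T HT Hcpt) as [xM [HM _]].
  destruct (continuity_ab_min f 0 T HT Hcpt) as [xm [Hm _]].
  exists (Rabs (f xM) + Rabs (f xm)). intros x Hx.
  specialize (HM x Hx). specialize (Hm x Hx). apply Rabs_le.
  pose proof (Rle_abs (f xM)). pose proof (Rabs_maj2 (f xm)).
  pose proof (Rabs_pos (f xM)). pose proof (Rabs_pos (f xm)). lra.
Qed.

Lemma bounded_on_interval_family n (f : nat -> R -> R) T :
  0 <= T -> (forall k, (k < n)%nat -> forall x, continuous (f k) x) ->
  exists K, 0 <= K /\ forall k x, (k < n)%nat -> 0 <= x <= T -> Rabs (f k x) <= K.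
Proof.
  intros HT. induction n as [|n IH]; intros Hc.
  - exists 0. split; [lra|]. intros; lia.
  - destruct IH as [K [HK HKb]]; [intros k Hk; apply Hc; lia|].
    destruct (bounded_on_interval (f n) T HT) as [Kn HKn]; [apply Hc; lia|].
    exists (Rmax K Kn). split; [apply (Rle_trans _ K); [exact HK|apply Rmax_l]|].
    intros k x Hk Hx. destruct (Nat.eq_dec k n) as [->|Hkn].
    + eapply Rle_trans; [apply HKn, Hx|apply Rmax_r].
    + eapply Rle_trans; [apply HKb; [lia|exact Hx]|apply Rmax_l].
Qed.

Lemma ex_RInt_of_continuous (g : R -> R) a b : (forall z, continuous g z) -> ex_RInt g a b.
Proof. intros Hg. apply (ex_RInt_continuous (V := R_CompleteNormedModule)). intros; apply Hg. Qed.

Lemma RInt_sub_lower (g : R -> R) x y :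
  (forall z, continuous g z) -> RInt g 0 x - RInt g 0 y = RInt g y x.
Proof.
  intros Hg. rewrite <- (RInt_Chasles g 0 y x) by apply ex_RInt_of_continuous, Hg.
  change (RInt g 0 y + RInt g y x - RInt g 0 y = RInt g y x). ring.
Qed.

Lemma RInt_Rminus (f g : R -> R) a b :
  (forall z, continuous f z) -> (forall z, continuous g z) ->
  RInt (fun x => f x - g x) a b = RInt f a b - RInt g a b.
Proof. intros Hf Hg. apply (RInt_minus f g); apply ex_RInt_of_continuous; assumption. Qed.

Lemma Rabs_RInt_le_const (g : R -> R) B x y :
  (forall z, continuous g z) -> (forall t, Rabs (g t) <= B) ->
  Rabs (RInt g y x) <= B * Rabs (x - y).
Proof.
  intros Hg HB. destruct (Rle_or_lt y x) as [Hyx|Hxy].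
  - rewrite (Rabs_right (x - y)) by lra. rewrite Rmult_comm.
    apply abs_RInt_le_const; [exact Hyx|apply ex_RInt_of_continuous, Hg|intros; apply HB].
  - rewrite <- (opp_RInt_swap g x y) by apply ex_RInt_of_continuous, Hg.
    change (Rabs (- RInt g x y) <= B * Rabs (x - y)).
    rewrite Rabs_Ropp, Rabs_minus_sym, (Rabs_right (y - x)) by lra. rewrite Rmult_comm.
    apply abs_RInt_le_const; [lra|apply ex_RInt_of_continuous, Hg|intros; apply HB].
Qed.

Lemma Rabs_RInt_le_RInt (f g : R -> R) s :
  0 <= s -> (forall z, continuous f z) -> (forall z, continuous g z) ->
  (forall r, 0 <= r <= s -> Rabs (f r) <= g r) -> Rabs (RInt f 0 s) <= RInt g 0 s.
Proof.
  intros Hs Hf Hg Hfg.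
  eapply Rle_trans; [apply abs_RInt_le; [exact Hs|apply ex_RInt_of_continuous, Hf]|].
  apply RInt_le; [exact Hs| |apply ex_RInt_of_continuous, Hg|intros; apply Hfg; lra].
  apply ex_RInt_of_continuous. intros z. apply continuous_Rabs_comp, Hf.
Qed.

Lemma continuous_scal_exp A c z : continuous (fun r => A * exp (c * r)) z.
Proof. apply (ex_derive_continuous (V := R_NormedModule)). auto_derive. auto. Qed.

Lemma RInt_scal_exp A c s :
  0 < c -> RInt (fun r => A * exp (c * r)) 0 s = A * (exp (c * s) - 1) / c.
Proof.
  intros Hc. apply is_RInt_unique.
  replace (A * (exp (c * s) - 1) / c) with (minus (A * exp (c * s) / c) (A * exp (c * 0) / c)).
  2:{ rewrite Rmult_0_r, exp_0. unfold minus, plus, opp; simpl. field. lra. }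
  apply (is_RInt_derive (fun r => A * exp (c * r) / c)).
  - intros x _. auto_derive; [auto|]. field. lra.
  - intros x _. apply (ex_derive_continuous (V := R_NormedModule)). auto_derive. auto.
Qed.

Lemma eq_0_of_geom_bound x C : (forall n, Rabs x <= C * (/2) ^ n) -> x = 0.
Proof.
  intros H.
  assert (Hq : Rabs (/2) < 1) by (rewrite Rabs_right; lra).
  pose proof (is_lim_seq_scal_l _ C 0 (is_lim_seq_geom (/2) Hq)) as L.
  simpl in L. rewrite Rmult_0_r in L.
  pose proof (is_lim_seq_le (fun _ => Rabs x) _ (Rabs x) 0 H (is_lim_seq_const _) L) as Hle.
  simpl in Hle. destruct (Req_dec x 0) as [E|E]; [exact E|].
  pose proof (Rabs_pos_lt x E). lra.
Qed.

Lemma Rabs_lim_sub_le (u : nat -> R) (l a C : R) :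
  is_lim_seq u l -> (forall m, Rabs (u m - a) <= C) -> Rabs (l - a) <= C.
Proof.
  intros Hu H.
  assert (L : is_lim_seq (fun m => Rabs (u m - a)) (Rabs (l - a))).
  { apply (is_lim_seq_abs _ (Finite (l - a))).
    exact (is_lim_seq_minus' u (fun _ => a) l a Hu (is_lim_seq_const a)). }
  exact (is_lim_seq_le _ (fun _ => C) _ C H L (is_lim_seq_const _)).
Qed.

Lemma is_lim_seq_geom_cauchy (u : nat -> R) C :
  (forall m p, (p <= m)%nat -> Rabs (u m - u p) <= C * (/2) ^ p) ->
  exists l : R, is_lim_seq u l /\ forall p, Rabs (l - u p) <= C * (/2) ^ p.
Proof.
  intros Hu.
  assert (Hq : Rabs (/2) < 1) by (rewrite Rabs_right; lra).
  assert (Hsmall := is_lim_seq_scal_l _ C 0 (is_lim_seq_geom (/2) Hq)).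
  simpl in Hsmall. rewrite Rmult_0_r in Hsmall. apply is_lim_seq_spec in Hsmall.
  assert (Hc : ex_lim_seq_cauchy u).
  { intros eps. destruct (Hsmall eps) as [N HN]. exists N. intros m p Hm Hp.
    assert (Hsm : forall k, (N <= k)%nat -> C * (/2) ^ k < eps).
    { intros k Hk. specialize (HN k Hk). rewrite Rminus_0_r in HN.
      eapply Rle_lt_trans; [apply Rle_abs|exact HN]. }
    destruct (Nat.le_gt_cases p m) as [Hpm|Hmp].
    - eapply Rle_lt_trans; [apply Hu, Hpm|apply Hsm, Hp].
    - rewrite Rabs_minus_sym. eapply Rle_lt_trans; [apply Hu; lia|apply Hsm, Hm]. }
  destruct (proj2 (ex_lim_seq_cauchy_corr u) Hc) as [l Hl].
  exists l. split; [exact Hl|]. intros p.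
  apply (Rabs_lim_sub_le (fun m => u (m + p)%nat)).
  - apply (is_lim_seq_incr_n u p l), Hl.
  - intros m. apply Hu. lia.
Qed.

(** * Global existence for bounded, globally Lipschitz fields *)

Section Picard.

Variable n : nat.
Variable F : nat -> R -> (nat -> R) -> R.
Variables L B : R.
Hypothesis L_nonneg : 0 <= L.
Hypothesis B_nonneg : 0 <= B.
Hypothesis F_lipschitz :
  forall j s x y, (j < n)%nat -> Rabs (F j s x - F j s y) <= L * l1_dist n x y.
Hypothesis F_bounded : forall j s x, (j < n)%nat -> Rabs (F j s x) <= B.
Hypothesis F_continuous_time : forall j x z, (j < n)%nat -> continuous (fun s => F j s x) z.
Variable x0 : nat -> R.

Lemma continuous_field_path j (p : nat -> R -> R) z :
  (j < n)%nat -> (forall k, (k < n)%nat -> continuous (p k) z) ->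
  continuous (fun s => F j s (fun k => p k s)) z.
Proof.
  intros Hj Hp.
  set (pz := fun k : nat => p k z).
  apply (continuous_of_dominated _ (fun s => L * l1_dist n (fun k => p k s) pz
                                            + Rabs (F j s pz - F j z pz))).
  - intros s. fold pz. specialize (F_lipschitz j s (fun k => p k s) pz Hj).
    pose proof (Rabs_triang (F j s (fun k => p k s) - F j s pz) (F j s pz - F j z pz)) as Htri.
    replace (F j s (fun k => p k s) - F j s pz + (F j s pz - F j z pz))
      with (F j s (fun k => p k s) - F j z pz) in Htri by ring.
    lra.
  - apply (continuous_plus (fun s => L * l1_dist n (fun k => p k s) pz)).
    + apply (continuous_scal_r L (fun s => l1_dist n (fun k => p k s) pz)).
      apply (continuous_l1_dist n p (fun k _ => p k z)).
      intros k Hk. split; [apply Hp, Hk|apply continuous_const].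
    + apply continuous_Rabs_comp.
      apply (continuous_minus (fun s => F j s pz) (fun _ => F j z pz));
        [apply F_continuous_time, Hj|apply continuous_const].
  - unfold pz. rewrite l1_dist_diag, Rminus_diag, Rabs_R0. ring.
Qed.

Fixpoint picard (m : nat) : nat -> R -> R :=
  match m with
  | O => fun j _ => x0 j
  | S m => fun j t => x0 j + RInt (fun s => F j s (fun k => picard m k s)) 0 t
  end.

Lemma picard_lipschitz m :
  forall j x y, (j < n)%nat -> Rabs (picard m j x - picard m j y) <= B * Rabs (x - y).
Proof.
  induction m as [|m IH]; intros j x y Hj; simpl.
  - rewrite Rminus_diag, Rabs_R0. apply Rmult_le_pos; [exact B_nonneg|apply Rabs_pos].
  - set (g := fun s => F j s (fun k => picard m k s)).
    assert (Hg : forall z, continuous g z).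
    { intros z. apply continuous_field_path; [exact Hj|].
      intros k Hk. apply (continuous_of_lipschitz _ B). intros; apply IH, Hk. }
    rewrite Rminus_plus_l_l, RInt_sub_lower by exact Hg.
    apply Rabs_RInt_le_const; [exact Hg|]. intros; apply F_bounded, Hj.
Qed.

Lemma continuous_picard m j z : (j < n)%nat -> continuous (picard m j) z.
Proof. intros Hj. apply (continuous_of_lipschitz _ B). intros; apply picard_lipschitz, Hj. Qed.

Lemma continuous_picard_field m j z :
  (j < n)%nat -> continuous (fun s => F j s (fun k => picard m k s)) z.
Proof.
  intros Hj. apply continuous_field_path; [exact Hj|]. intros; apply continuous_picard; assumption.
Qed.

(* The weight [exp (rate * s)] makes the Picard map a contraction with factor 1/2 on all
   of [0, +oo), for the norm [sup_s exp (- rate * s) * l1_dist n (u s) (v s)]. *)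
Definition rate := 2 * (INR n * L + 1).
Definition picard_gap := INR n * B / rate.

Lemma rate_pos : 0 < rate.
Proof. unfold rate. pose proof (pos_INR n). nra. Qed.

Lemma picard_gap_nonneg : 0 <= picard_gap.
Proof.
  unfold picard_gap. pose proof rate_pos. pose proof (pos_INR n).
  apply Rmult_le_pos; [nra|left; apply Rinv_0_lt_compat; lra].
Qed.

Lemma picard_succ_sub_le m j s C :
  0 <= s -> (j < n)%nat ->
  (forall r, 0 <= r <= s ->
     l1_dist n (fun k => picard (S m) k r) (fun k => picard m k r) <= C * exp (rate * r)) ->
  Rabs (picard (S (S m)) j s - picard (S m) j s) <= L * C * (exp (rate * s) - 1) / rate.
Proof.
  intros Hs Hj Hdist.
  set (g1 := fun r => F j r (fun k => picard (S m) k r)).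
  set (g0 := fun r => F j r (fun k => picard m k r)).
  change (picard (S (S m)) j s) with (x0 j + RInt g1 0 s).
  change (picard (S m) j s) with (x0 j + RInt g0 0 s).
  rewrite Rminus_plus_l_l.
  assert (Hg1 : forall z, continuous g1 z) by (intros; apply continuous_picard_field, Hj).
  assert (Hg0 : forall z, continuous g0 z) by (intros; apply continuous_picard_field, Hj).
  rewrite <- RInt_Rminus by assumption.
  rewrite <- (RInt_scal_exp (L * C) rate s rate_pos).
  apply Rabs_RInt_le_RInt; [exact Hs| |intros; apply continuous_scal_exp|].
  - intros z. apply (continuous_minus g1 g0); auto.
  - intros r Hr. unfold g1, g0. eapply Rle_trans; [apply F_lipschitz, Hj|].
    rewrite Rmult_assoc. apply Rmult_le_compat_l; [exact L_nonneg|]. apply Hdist, Hr.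
Qed.

Lemma picard_step m s :
  0 <= s ->
  l1_dist n (fun k => picard (S m) k s) (fun k => picard m k s)
  <= picard_gap * exp (rate * s) * (/2) ^ m.
Proof.
  pose proof rate_pos as Hrate. pose proof (pos_INR n) as Hn. pose proof picard_gap_nonneg.
  revert s. induction m as [|m IH]; intros s Hs.
  - rewrite pow_O, Rmult_1_r.
    eapply Rle_trans; [apply (l1_dist_le _ _ _ (B * s))|].
    + intros k Hk. simpl picard. rewrite Rplus_minus_l.
      replace s with (Rabs (s - 0)) at 2 by (rewrite Rminus_0_r, Rabs_right; lra).
      apply Rabs_RInt_le_const; [intros; apply (continuous_picard_field 0), Hk|].
      intros; apply F_bounded, Hk.
    + assert (Hlin : rate * s <= exp (rate * s)) by (pose proof (exp_ineq1_le (rate * s)); lra).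
      unfold picard_gap.
      replace (INR n * (B * s)) with (INR n * B / rate * (rate * s)) by (field; lra).
      apply Rmult_le_compat_l; [exact picard_gap_nonneg|exact Hlin].
  - set (C := picard_gap * (/2) ^ m).
    assert (HC : 0 <= C) by (apply Rmult_le_pos; [assumption|apply pow_le; lra]).
    eapply Rle_trans; [apply (l1_dist_le _ _ _ (L * C * (exp (rate * s) - 1) / rate))|].
    + intros k Hk. apply picard_succ_sub_le; [exact Hs|exact Hk|].
      intros r Hr. unfold C. replace (picard_gap * (/ 2) ^ m * exp (rate * r))
        with (picard_gap * exp (rate * r) * (/ 2) ^ m) by ring. apply IH; lra.
    + assert (Hhalf : INR n * L <= rate / 2) by (unfold rate; lra).
      pose proof (exp_pos (rate * s)).
      replace (picard_gap * exp (rate * s) * (/ 2) ^ S m) with (C * exp (rate * s) / 2)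
        by (unfold C; simpl; field).
      replace (INR n * (L * C * (exp (rate * s) - 1) / rate))
        with (INR n * L / rate * (C * (exp (rate * s) - 1))) by (field; lra).
      assert (Hfrac : INR n * L / rate <= / 2).
      { apply Rmult_le_reg_r with rate; [lra|]. field_simplify; lra. }
      assert (0 <= INR n * L / rate)
        by (apply Rmult_le_pos; [nra|left; apply Rinv_0_lt_compat; lra]).
      assert (0 <= C * (exp (rate * s) - 1))
        by (apply Rmult_le_pos; [lra|]; pose proof (exp_ineq1_le (rate * s)); nra).
      nra.
Qed.

Lemma picard_cauchy m p s j :
  0 <= s -> (j < n)%nat -> (p <= m)%nat ->
  Rabs (picard m j s - picard p j s) <= 2 * picard_gap * exp (rate * s) * (/2) ^ p.
Proof.
  intros Hs Hj Hpm.
  set (A := picard_gap * exp (rate * s)).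
  assert (HA : 0 <= A) by (apply Rmult_le_pos; [apply picard_gap_nonneg|left; apply exp_pos]).
  assert (Htel : forall d,
            Rabs (picard (p + d) j s - picard p j s) <= 2 * A * ((/2) ^ p - (/2) ^ (p + d))).
  { induction d as [|d IH].
    - rewrite Nat.add_0_r, !Rminus_diag, Rabs_R0. lra.
    - rewrite Nat.add_succ_r.
      pose proof (Rabs_sub_le_l1_dist n (fun k => picard (S (p + d)) k s)
                                        (fun k => picard (p + d) k s) j Hj) as Hcomp.
      pose proof (picard_step (p + d) s Hs) as Hstep. fold A in Hstep.
      pose proof (Rabs_triang (picard (S (p + d)) j s - picard (p + d) j s)
                              (picard (p + d) j s - picard p j s)) as Htri.
      replace (picard (S (p + d)) j s - picard (p + d) j s + (picard (p + d) j s - picard p j s))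
        with (picard (S (p + d)) j s - picard p j s) in Htri by ring.
      change ((/2) ^ S (p + d)) with (/2 * (/2) ^ (p + d)). cbv beta in Hcomp. lra. }
  replace m with (p + (m - p))%nat by lia.
  eapply Rle_trans; [apply Htel|].
  replace (2 * picard_gap * exp (rate * s)) with (2 * A) by (unfold A; ring).
  pose proof (pow_le (/2) (p + (m - p)) ltac:(lra)). nra.
Qed.

(* Frozen for t < 0, so that the limit is globally Lipschitz. *)
Definition picard_limit (j : nat) (t : R) : R :=
  real (Lim_seq (fun m => picard m j (Rmax 0 t))).

Lemma picard_limit_spec j s :
  0 <= s -> (j < n)%nat ->
  is_lim_seq (fun m => picard m j s) (picard_limit j s) /\
  forall m, Rabs (picard_limit j s - picard m j s) <= 2 * picard_gap * exp (rate * s) * (/2) ^ m.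
Proof.
  intros Hs Hj.
  destruct (is_lim_seq_geom_cauchy (fun m => picard m j s) (2 * picard_gap * exp (rate * s)))
    as [l [Hl Hbound]].
  { intros m p Hpm. apply picard_cauchy; assumption. }
  unfold picard_limit. rewrite Rmax_right by exact Hs.
  rewrite (is_lim_seq_unique _ _ Hl). split; [exact Hl|exact Hbound].
Qed.

Lemma picard_limit_Rmax0 j t : picard_limit j (Rmax 0 t) = picard_limit j t.
Proof. unfold picard_limit. rewrite (Rmax_right 0 (Rmax 0 t)) by apply Rmax_l. reflexivity. Qed.

Lemma picard_limit_lipschitz j x y :
  (j < n)%nat -> Rabs (picard_limit j x - picard_limit j y) <= B * Rabs (x - y).
Proof.
  intros Hj. rewrite <- (picard_limit_Rmax0 j x), <- (picard_limit_Rmax0 j y).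
  destruct (picard_limit_spec j _ (Rmax_l 0 x) Hj) as [Hx _].
  destruct (picard_limit_spec j _ (Rmax_l 0 y) Hj) as [Hy _].
  rewrite <- (Rminus_0_r (picard_limit j (Rmax 0 x) - picard_limit j (Rmax 0 y))).
  apply (Rabs_lim_sub_le _ _ _ _ (is_lim_seq_minus' _ _ _ _ Hx Hy)).
  intros m. rewrite Rminus_0_r. eapply Rle_trans; [apply picard_lipschitz, Hj|].
  apply Rmult_le_compat_l; [exact B_nonneg|apply Rabs_Rmax0_sub_le].
Qed.

Lemma continuous_picard_limit_field j z :
  (j < n)%nat -> continuous (fun s => F j s (fun k => picard_limit k s)) z.
Proof.
  intros Hj. apply continuous_field_path; [exact Hj|].
  intros k Hk. apply (continuous_of_lipschitz _ B). intros; apply picard_limit_lipschitz, Hk.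
Qed.

Lemma picard_limit_integral j t :
  0 <= t -> (j < n)%nat ->
  picard_limit j t = x0 j + RInt (fun s => F j s (fun k => picard_limit k s)) 0 t.
Proof.
  intros Ht Hj. set (h := fun s => F j s (fun k => picard_limit k s)).
  set (A := 2 * picard_gap * exp (rate * t)).
  assert (HA : 0 <= A).
  { pose proof picard_gap_nonneg. pose proof (exp_pos (rate * t)). unfold A. nra. }
  apply Rminus_diag_uniq, (eq_0_of_geom_bound _ (A + t * (L * (INR n * A)))). intros m.
  set (g := fun s => F j s (fun k => picard m k s)).
  replace (picard_limit j t - (x0 j + RInt h 0 t))
    with ((picard_limit j t - picard (S m) j t) + (RInt g 0 t - RInt h 0 t))
    by (change (picard (S m) j t) with (x0 j + RInt g 0 t); ring).
  eapply Rle_trans; [apply Rabs_triang|].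
  pose proof (pow_le (/2) m ltac:(lra)) as Hq.
  assert (Hlim : Rabs (picard_limit j t - picard (S m) j t) <= A * (/2) ^ m).
  { eapply Rle_trans; [apply (picard_limit_spec j t Ht Hj)|]. fold A. simpl. nra. }
  assert (Hint : Rabs (RInt g 0 t - RInt h 0 t) <= t * (L * (INR n * A)) * (/2) ^ m).
  { rewrite <- RInt_Rminus
      by (intros; first [apply continuous_picard_field, Hj
                        |apply continuous_picard_limit_field, Hj]).
    replace (t * (L * (INR n * A)) * (/2) ^ m)
      with ((t - 0) * (L * (INR n * (A * (/2) ^ m)))) by ring.
    apply abs_RInt_le_const; [exact Ht| |].
    - apply ex_RInt_of_continuous. intros z.
      apply (continuous_minus g h);
        [apply continuous_picard_field, Hj|apply continuous_picard_limit_field, Hj].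
    - intros r Hr. unfold g, h. eapply Rle_trans; [apply F_lipschitz, Hj|].
      apply Rmult_le_compat_l; [exact L_nonneg|]. apply l1_dist_le. intros k Hk.
      rewrite Rabs_minus_sym. eapply Rle_trans; [apply (picard_limit_spec k r); [lra|exact Hk]|].
      assert (Hexp : exp (rate * r) <= exp (rate * t)).
      { destruct (Req_dec r t) as [->|Hrt]; [lra|].
        left. apply exp_increasing. pose proof rate_pos. nra. }
      apply Rmult_le_compat_r; [exact Hq|]. unfold A.
      apply Rmult_le_compat_l; [pose proof picard_gap_nonneg; lra|exact Hexp]. }
  nra.
Qed.

Lemma picard_limit_derive j t :
  0 < t -> (j < n)%nat ->
  is_derive (picard_limit j) t (F j t (fun k => picard_limit k t)).
Proof.
  intros Ht Hj. set (h := fun s => F j s (fun k => picard_limit k s)).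
  assert (Hh : forall z, continuous h z) by (intros; apply continuous_picard_limit_field, Hj).
  assert (Hint : is_derive (fun b => RInt h 0 b) t (h t)).
  { apply (is_derive_RInt h (fun b => RInt h 0 b) 0 t); [|apply Hh].
    apply filter_forall. intros b. apply (RInt_correct (V := R_CompleteNormedModule)).
    apply ex_RInt_of_continuous, Hh. }
  apply (is_derive_ext_loc (fun b => x0 j + RInt h 0 b)).
  - exists (mkposreal t Ht). intros y Hy. change (Rabs (y - t) < t) in Hy.
    apply Rabs_def2 in Hy. symmetry. apply picard_limit_integral; [lra|exact Hj].
  - rewrite <- (Rplus_0_l (F j t (fun k => picard_limit k t))).
    apply (is_derive_plus (fun _ => x0 j) (fun b => RInt h 0 b));
      [exact (is_derive_const (K := R_AbsRing) (x0 j) t)|exact Hint].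
Qed.

Theorem exists_global_solution :
  exists u : nat -> R -> R, forall j, (j < n)%nat ->
    (forall z, continuous (u j) z) /\ u j 0 = x0 j /\
    forall t, 0 < t -> is_derive (u j) t (F j t (fun k => u k t)).
Proof.
  exists picard_limit. intros j Hj. split; [|split].
  - intros z. apply (continuous_of_lipschitz _ B). intros; apply picard_limit_lipschitz, Hj.
  - rewrite picard_limit_integral by (lra || exact Hj).
    rewrite RInt_point. change zero with 0. ring.
  - intros t Ht. apply picard_limit_derive; assumption.
Qed.

End Picard.

(** * Uniqueness for locally Lipschitz fields *)

Lemma is_derive_sqr_sub (f g : R -> R) x a b :
  is_derive f x a -> is_derive g x b ->
  is_derive (fun y => (f y - g y) ^ 2) x (2 * (f x - g x) * (a - b)).
Proof.
  intros Hf Hg.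
  pose proof (is_derive_pow (fun y => f y - g y) 2 x (a - b) (is_derive_minus f g x a b Hf Hg))
    as D.
  replace (2 * (f x - g x) * (a - b)) with (INR 2 * (a - b) * (f x - g x) ^ Nat.pred 2)
    by (simpl; ring).
  exact D.
Qed.

Lemma continuous_sqr_sub (f g : R -> R) x :
  continuous f x -> continuous g x -> continuous (fun y => (f y - g y) ^ 2) x.
Proof.
  intros Hf Hg.
  assert (Hd : continuous (fun y => f y - g y) x) by exact (continuous_minus f g x Hf Hg).
  refine (continuous_ext (fun y => (f y - g y) * (f y - g y)) _ x _ _); [intros; simpl; ring|].
  exact (continuous_mult _ _ x Hd Hd).
Qed.

Lemma sum_mul_growth n (a d : nat -> R) L :
  0 <= L -> (forall k, (k < n)%nat -> Rabs (d k) <= L * sum_lt n (fun i => Rabs (a i))) ->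
  sum_lt n (fun k => 2 * a k * d k) <= 2 * L * INR n * sum_lt n (fun k => a k ^ 2).
Proof.
  intros HL Hd. set (S := sum_lt n (fun i => Rabs (a i))).
  apply (Rle_trans _ (sum_lt n (fun k => 2 * L * S * Rabs (a k)))).
  - apply sum_lt_le. intros k Hk. specialize (Hd k Hk). fold S in Hd.
    pose proof (Rle_abs (a k * d k)) as Had. rewrite Rabs_mult in Had.
    pose proof (Rabs_pos (a k)).
    assert (Rabs (a k) * Rabs (d k) <= Rabs (a k) * (L * S)) by (apply Rmult_le_compat_l; lra).
    nra.
  - rewrite sum_lt_scal_l. fold S.
    pose proof (sum_lt_abs_sqr n a) as Hsq. fold S in Hsq.
    replace (2 * L * INR n * sum_lt n (fun k => a k ^ 2))
      with (2 * L * (INR n * sum_lt n (fun k => a k ^ 2))) by ring.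
    replace (2 * L * S * S) with (2 * L * S ^ 2) by ring.
    apply Rmult_le_compat_l; [lra|exact Hsq].
Qed.

Definition locally_lipschitz (n : nat) (F : nat -> R -> (nat -> R) -> R) : Prop :=
  forall K, 0 <= K -> exists L, 0 <= L /\
    forall j s x y, (j < n)%nat ->
      (forall k, (k < n)%nat -> Rabs (x k) <= K /\ Rabs (y k) <= K) ->
      Rabs (F j s x - F j s y) <= L * l1_dist n x y.

Lemma sq_dist_solutions_nonpos n F (u v : nat -> R -> R) t0 :
  locally_lipschitz n F -> 0 <= t0 ->
  (forall k x, (k < n)%nat -> continuous (u k) x /\ continuous (v k) x) ->
  (forall k, (k < n)%nat -> u k 0 = v k 0) ->
  (forall j t, (j < n)%nat -> 0 < t ->
     is_derive (u j) t (F j t (fun k => u k t)) /\ is_derive (v j) t (F j t (fun k => v k t))) ->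
  sum_lt n (fun k => (u k t0 - v k t0) ^ 2) <= 0.
Proof.
  intros HF Ht0 Hc Hinit Hder.
  assert (HT : 0 <= t0 + 1) by lra.
  destruct (bounded_on_interval_family n u (t0 + 1) HT) as [Ku [HKu Hbu]];
    [intros; apply Hc; auto|].
  destruct (bounded_on_interval_family n v (t0 + 1) HT) as [Kv [HKv Hbv]];
    [intros; apply Hc; auto|].
  destruct (HF (Ku + Kv)) as [L [HL HLip]]; [lra|].
  apply (gronwall_nonpos (fun t => sum_lt n (fun k => (u k t - v k t) ^ 2))
           (fun t => sum_lt n (fun k => 2 * (u k t - v k t) *
                       (F k t (fun i => u i t) - F k t (fun i => v i t))))
           (2 * L * INR n) (t0 + 1)); [| | | |lra].
  - intros x. apply (continuous_sum_lt n (fun k t => (u k t - v k t) ^ 2)).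
    intros k Hk. apply continuous_sqr_sub; apply Hc, Hk.
  - intros x Hx. apply (is_derive_sum_lt n (fun k t => (u k t - v k t) ^ 2)).
    intros k Hk. apply is_derive_sqr_sub; apply Hder; lra || assumption.
  - intros x Hx. apply sum_mul_growth; [exact HL|]. intros k Hk.
    apply HLip; [exact Hk|]. intros i Hi. cbv beta.
    split; [eapply Rle_trans; [apply Hbu; [exact Hi|lra]|lra]
           |eapply Rle_trans; [apply Hbv; [exact Hi|lra]|lra]].
  - apply (Rle_trans _ (sum_lt n (fun _ => 0))); [|rewrite sum_lt_const; lra].
    apply sum_lt_le. intros k Hk. rewrite Hinit, Rminus_diag by exact Hk. simpl. lra.
Qed.

Theorem solution_unique n F (u v : nat -> R -> R) :
  locally_lipschitz n F ->
  (forall k, (k < n)%nat -> cont_on_Rplus (u k) /\ cont_on_Rplus (v k) /\ u k 0 = v k 0) ->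
  (forall j t, (j < n)%nat -> 0 < t ->
     is_derive (u j) t (F j t (fun k => u k t)) /\ is_derive (v j) t (F j t (fun k => v k t))) ->
  forall k t, (k < n)%nat -> 0 <= t -> u k t = v k t.
Proof.
  intros HF Hinit Hder k0 t0 Hk0 Ht0.
  assert (Hsum : sum_lt n (fun k => (u k (Rmax 0 t0) - v k (Rmax 0 t0)) ^ 2) <= 0).
  { apply (sq_dist_solutions_nonpos n F (fun k t => u k (Rmax 0 t)) (fun k t => v k (Rmax 0 t)));
      [exact HF|exact Ht0| | |].
    - intros k x Hk. destruct (Hinit k Hk) as (Hu & Hv & _).
      split; apply continuous_Rmax0_comp; assumption.
    - intros k Hk. rewrite Rmax_left by lra. apply Hinit, Hk.
    - intros j t Hj Ht. rewrite Rmax_right by lra.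
      split; apply is_derive_Rmax0_comp; try exact Ht; apply Hder; assumption. }
  rewrite Rmax_right in Hsum by exact Ht0.
  assert (Hsq : (u k0 t0 - v k0 t0) ^ 2 <= 0).
  { eapply Rle_trans; [apply (le_sum_lt n (fun k => (u k t0 - v k t0) ^ 2))|exact Hsum].
    - intros; apply pow2_ge_0.
    - exact Hk0. }
  nra.
Qed.

(** * The tumour model *)

Definition clip (M x : R) : R := Rmax 0 (Rmin M x).

Lemma clip_bounds M x : 0 <= M -> 0 <= clip M x <= M.
Proof. intros. unfold clip, Rmax, Rmin. repeat destruct Rle_dec; lra. Qed.

Lemma Rabs_clip_sub_le M x y : 0 <= M -> Rabs (clip M x - clip M y) <= Rabs (x - y).
Proof.
  intros. unfold clip, Rmax, Rmin.
  repeat destruct Rle_dec; unfold Rabs; repeat destruct Rcase_abs; lra.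
Qed.

Lemma clip_id M x : 0 <= x <= M -> clip M x = x.
Proof. intros. unfold clip, Rmax, Rmin. repeat destruct Rle_dec; lra. Qed.

Lemma clip_of_ge M x : 0 <= M -> M <= x -> clip M x = M.
Proof. intros. unfold clip, Rmax, Rmin. repeat destruct Rle_dec; lra. Qed.

Lemma clip_of_le M x : 0 <= M -> x <= 0 -> clip M x = 0.
Proof. intros. unfold clip, Rmax, Rmin. repeat destruct Rle_dec; lra. Qed.

Definition vec4 (x0 x1 x2 x3 : R) (k : nat) : R :=
  match k with 0 => x0 | 1 => x1 | 2 => x2 | _ => x3 end.

Section Model.

Variables al1 al2 be2 be3 be4 de1 de2 de4 : R.
Hypotheses (Hal1 : 0 <= al1) (Hal2 : 0 <= al2) (Hbe2 : 0 <= be2) (Hbe3 : 0 <= be3)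
  (Hbe4 : 0 <= be4) (Hde1 : 0 <= de1) (Hde2 : 0 <= de2) (Hde4 : 0 <= de4).

(* Components 0, 1, 2, 3 are u1, u2, u3, u4, and [e] is the value of the infusion i(t). *)
Definition rhs (j : nat) (e : R) (x : nat -> R) : R :=
  match j with
  | 0 => x 0%nat * (1 - x 0%nat - al1 * x 1%nat - de1 * x 2%nat)
  | 1 => be2 * x 1%nat * (1 - x 1%nat - al2 * x 0%nat - de2 * x 3%nat)
  | 2 => be3 * (x 1%nat - x 2%nat)
  | 3 => be4 * (e - x 3%nat - de4 * x 3%nat * x 1%nat)
  | _ => 0
  end.

Definition rhs_weight := 1 + al1 + de1 + be2 * (1 + al2 + de2) + be3 + be4 * (1 + de4).
Definition rhs_lip (K : R) := (1 + 2 * K) * rhs_weight.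

Lemma rhs_weight_ge :
  1 + al1 + de1 <= rhs_weight /\ be2 * (1 + al2 + de2) <= rhs_weight /\
  be3 <= rhs_weight /\ be4 * (1 + de4) <= rhs_weight.
Proof.
  unfold rhs_weight.
  assert (0 <= be2 * (1 + al2 + de2)) by (apply Rmult_le_pos; lra).
  assert (0 <= be4 * (1 + de4)) by (apply Rmult_le_pos; lra).
  lra.
Qed.

Lemma rhs_lip_nonneg K : 0 <= K -> 0 <= rhs_lip K.
Proof.
  intros HK. unfold rhs_lip. pose proof rhs_weight_ge as (W0 & _). apply Rmult_le_pos; lra.
Qed.

Lemma rhs_lipschitz_component K j e x y :
  0 <= K -> (forall k, (k < 4)%nat -> Rabs (x k) <= K /\ Rabs (y k) <= K) ->
  exists c, 0 <= c <= rhs_weight /\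
    Rabs (rhs j e x - rhs j e y) <= (1 + 2 * K) * c * l1_dist 4 x y.
Proof.
  intros HK Hxy. set (S := l1_dist 4 x y).
  assert (HS : 0 <= S) by apply l1_dist_nonneg.
  assert (Hd : forall k, (k < 4)%nat -> Rabs (x k - y k) <= S)
    by (intros; apply Rabs_sub_le_l1_dist; assumption).
  assert (Hq : forall k l, (k < 4)%nat -> (l < 4)%nat ->
                 Rabs (x k * x l - y k * y l) <= 2 * K * S)
    by (intros; apply Rabs_mul_sub_le_l1_dist; assumption).
  pose proof rhs_weight_ge as (W0 & W1 & W2 & W3).
  destruct j as [|[|[|[|j]]]]; cbn [rhs].
  - exists (1 + al1 + de1). split; [lra|].
    match goal with |- Rabs ?d <= _ => replace d with
      ((x 0%nat - y 0%nat) + - (x 0%nat * x 0%nat - y 0%nat * y 0%nat)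
       + - (al1 * (x 0%nat * x 1%nat - y 0%nat * y 1%nat))
       + - (de1 * (x 0%nat * x 2%nat - y 0%nat * y 2%nat))) by ring end.
    eapply Rle_trans; [apply Rabs_sum4_le; rewrite ?Rabs_Ropp;
      [apply Hd| apply Hq | apply Rabs_scal_le, Hq | apply Rabs_scal_le, Hq]; (lia || lra)|].
    assert (0 <= al1 * S) by nra. assert (0 <= de1 * S) by nra. nra.
  - exists (be2 * (1 + al2 + de2)). split; [split; [apply Rmult_le_pos|]; lra|].
    match goal with |- Rabs ?d <= _ => replace d with
      (be2 * ((x 1%nat - y 1%nat) + - (x 1%nat * x 1%nat - y 1%nat * y 1%nat)
       + - (al2 * (x 1%nat * x 0%nat - y 1%nat * y 0%nat))
       + - (de2 * (x 1%nat * x 3%nat - y 1%nat * y 3%nat)))) by ring end.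
    eapply Rle_trans; [apply Rabs_scal_le; [exact Hbe2|];
      apply Rabs_sum4_le; rewrite ?Rabs_Ropp;
      [apply Hd| apply Hq | apply Rabs_scal_le, Hq | apply Rabs_scal_le, Hq]; (lia || lra)|].
    assert (0 <= al2 * S) by nra. assert (0 <= de2 * S) by nra.
    assert (0 <= K * S) by nra. nra.
  - exists be3. split; [lra|].
    match goal with |- Rabs ?d <= _ => replace d with
      (be3 * ((x 1%nat - y 1%nat) + - (x 2%nat - y 2%nat))) by ring end.
    eapply Rle_trans; [apply Rabs_scal_le; [exact Hbe3|]; apply Rabs_triang|].
    rewrite Rabs_Ropp. assert (0 <= K * S) by nra.
    assert (Rabs (x 1%nat - y 1%nat) + Rabs (x 2%nat - y 2%nat) <= S).
    { unfold S, l1_dist. cbn [sum_lt].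
      pose proof (Rabs_pos (x 0%nat - y 0%nat)). pose proof (Rabs_pos (x 3%nat - y 3%nat)). lra. }
    nra.
  - exists (be4 * (1 + de4)). split; [split; [apply Rmult_le_pos|]; lra|].
    match goal with |- Rabs ?d <= _ => replace d with
      (be4 * (- (x 3%nat - y 3%nat)
              + - (de4 * (x 3%nat * x 1%nat - y 3%nat * y 1%nat)))) by ring end.
    eapply Rle_trans; [apply Rabs_scal_le; [exact Hbe4|]; apply Rabs_triang|].
    rewrite !Rabs_Ropp.
    pose proof (Hd 3%nat ltac:(lia)).
    pose proof (Rabs_scal_le de4 _ _ Hde4 (Hq 3%nat 1%nat ltac:(lia) ltac:(lia))).
    assert (0 <= K * S) by nra. assert (0 <= de4 * S) by nra. nra.
  - exists 0. split; [lra|]. rewrite Rminus_diag, Rabs_R0. lra.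
Qed.

Lemma rhs_lipschitz K j e x y :
  0 <= K -> (forall k, (k < 4)%nat -> Rabs (x k) <= K /\ Rabs (y k) <= K) ->
  Rabs (rhs j e x - rhs j e y) <= rhs_lip K * l1_dist 4 x y.
Proof.
  intros HK Hxy. destruct (rhs_lipschitz_component K j e x y HK Hxy) as [c [Hc Hbound]].
  eapply Rle_trans; [exact Hbound|]. unfold rhs_lip.
  apply Rmult_le_compat_r; [apply l1_dist_nonneg|]. apply Rmult_le_compat_l; lra.
Qed.

Lemma rhs_infusion_sub j e e' x : Rabs (rhs j e x - rhs j e' x) <= be4 * Rabs (e - e').
Proof.
  pose proof (Rabs_pos (e - e')).
  destruct j as [|[|[|[|j]]]]; cbn [rhs];
    try (rewrite Rminus_diag, Rabs_R0; apply Rmult_le_pos; assumption).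
  match goal with |- Rabs ?d <= _ => replace d with (be4 * (e - e')) by ring end.
  rewrite Rabs_mult, (Rabs_pos_eq be4) by exact Hbe4. lra.
Qed.

Lemma rhs_at_origin j e : Rabs (rhs j e (fun _ => 0)) <= be4 * Rabs e.
Proof.
  replace (rhs j e (fun _ => 0)) with (rhs j e (fun _ => 0) - rhs j 0 (fun _ => 0)).
  - rewrite <- (Rminus_0_r e) at 2. apply rhs_infusion_sub.
  - destruct j as [|[|[|[|j]]]]; cbn [rhs]; ring.
Qed.

(* A box [0, M] that the flow cannot leave while the infusion stays in [0, emax]. *)
Definition trapping_box (M : nat -> R) (emax : R) : Prop :=
  1 <= M 0%nat /\ 1 <= M 1%nat /\ M 1%nat <= M 2%nat /\ emax <= M 3%nat.

Lemma rhs_inward_top M emax e x j :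
  trapping_box M emax -> 0 <= e <= emax -> (forall k, 0 <= x k <= M k) ->
  x j = M j -> (j < 4)%nat -> rhs j e x <= 0.
Proof.
  intros (M0 & M1 & M12 & M3) He Hx Hxj Hj.
  pose proof (Hx 0%nat). pose proof (Hx 1%nat). pose proof (Hx 2%nat). pose proof (Hx 3%nat).
  destruct j as [|[|[|[|j]]]]; cbn [rhs]; rewrite ?Hxj; [| | | |lia].
  - assert (0 <= al1 * x 1%nat) by nra. assert (0 <= de1 * x 2%nat) by nra. nra.
  - assert (0 <= al2 * x 0%nat) by nra. assert (0 <= de2 * x 3%nat) by nra.
    assert (M 1%nat * (1 - M 1%nat - al2 * x 0%nat - de2 * x 3%nat) <= 0) by nra. nra.
  - nra.
  - assert (0 <= de4 * M 3%nat * x 1%nat) by (apply Rmult_le_pos; [apply Rmult_le_pos|]; lra). nra.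
Qed.

Lemma rhs_inward_bottom e x j :
  0 <= e -> (forall k, 0 <= x k) -> x j = 0 -> (j < 4)%nat -> 0 <= rhs j e x.
Proof.
  intros He Hx Hxj Hj. pose proof (Hx 1%nat).
  destruct j as [|[|[|[|j]]]]; cbn [rhs]; rewrite ?Hxj; [lra|lra|nra|nra|lia].
Qed.

Lemma rhs_ext j e x y : (forall k, (k < 4)%nat -> x k = y k) -> rhs j e x = rhs j e y.
Proof.
  intros Hxy. destruct j as [|[|[|[|j]]]]; cbn [rhs]; [| | | |reflexivity];
    rewrite ?(Hxy 0%nat), ?(Hxy 1%nat), ?(Hxy 2%nat), ?(Hxy 3%nat) by lia; reflexivity.
Qed.

Lemma rhs_locally_lipschitz (i : R -> R) : locally_lipschitz 4 (fun j s x => rhs j (i s) x).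
Proof.
  intros K HK. exists (rhs_lip K). split; [apply rhs_lip_nonneg, HK|].
  intros j s x y _ Hxy. apply rhs_lipschitz; assumption.
Qed.

Section Existence.

Variables (i : R -> R) (iM : R) (a : nat -> R).
Hypothesis Hi : admissible_infusion iM i.
Hypothesis Ha : forall k, 0 <= a k.

Definition box_top (k : nat) : R :=
  match k with
  | 0 => Rmax 1 (a 0%nat)
  | 1 => Rmax 1 (a 1%nat)
  | 2 => Rmax (Rmax 1 (a 1%nat)) (a 2%nat)
  | _ => Rmax iM (a 3%nat)
  end.

Lemma box_top_trapping : trapping_box box_top iM.
Proof. unfold trapping_box, box_top. repeat split; unfold Rmax; repeat destruct Rle_dec; lra. Qed.

Lemma init_in_box k : (k < 4)%nat -> 0 <= a k <= box_top k.
Proof.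
  intros Hk. pose proof (Ha k). pose proof (Ha 1%nat).
  split; [assumption|]. destruct k as [|[|[|[|k]]]]; [| | | |lia];
    unfold box_top, Rmax; repeat destruct Rle_dec; lra.
Qed.

Lemma box_top_nonneg k : 0 <= box_top k.
Proof.
  pose proof (Ha 3%nat). pose proof (init_in_box 0 ltac:(lia)).
  pose proof (init_in_box 1 ltac:(lia)). pose proof (init_in_box 2 ltac:(lia)).
  destruct k as [|[|[|k]]]; [lra|lra|lra|]. apply (Rle_trans _ (a 3%nat)); [lra|apply Rmax_r].
Qed.

Definition box_radius := box_top 0 + box_top 1 + box_top 2 + box_top 3.

Lemma box_top_le_radius k : (k < 4)%nat -> box_top k <= box_radius.
Proof.
  intros Hk. pose proof (box_top_nonneg 0). pose proof (box_top_nonneg 1).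
  pose proof (box_top_nonneg 2). pose proof (box_top_nonneg 3).
  unfold box_radius. destruct k as [|[|[|[|k]]]]; lra || lia.
Qed.

Lemma box_radius_nonneg : 0 <= box_radius.
Proof. apply (Rle_trans _ (box_top 0)); [apply box_top_nonneg|apply box_top_le_radius; lia]. Qed.

Definition infusion_ext (t : R) : R := i (Rmax 0 t).

Definition clipped_rhs (j : nat) (s : R) (x : nat -> R) : R :=
  rhs j (infusion_ext s) (fun k => clip (box_top k) (x k)).

Lemma infusion_ext_bounds t : 0 <= infusion_ext t <= iM.
Proof. apply Hi, Rmax_l. Qed.

Lemma Rabs_clip_box_le x k : (k < 4)%nat -> Rabs (clip (box_top k) (x k)) <= box_radius.
Proof.
  intros Hk. pose proof (clip_bounds (box_top k) (x k) (box_top_nonneg k)).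
  pose proof (box_top_le_radius k Hk). rewrite Rabs_pos_eq; lra.
Qed.

Lemma clipped_rhs_lipschitz j s x y :
  Rabs (clipped_rhs j s x - clipped_rhs j s y) <= rhs_lip box_radius * l1_dist 4 x y.
Proof.
  eapply Rle_trans.
  - apply rhs_lipschitz; [exact box_radius_nonneg|].
    intros k Hk. split; apply Rabs_clip_box_le, Hk.
  - apply Rmult_le_compat_l; [exact (rhs_lip_nonneg _ box_radius_nonneg)|].
    apply sum_lt_le. intros k Hk. apply Rabs_clip_sub_le, box_top_nonneg.
Qed.

Definition clipped_rhs_bound := be4 * iM + rhs_lip box_radius * (4 * box_radius).

Lemma clipped_rhs_bounded j s x : Rabs (clipped_rhs j s x) <= clipped_rhs_bound.
Proof.
  set (e := infusion_ext s). set (cx := fun k => clip (box_top k) (x k)).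
  change (Rabs (rhs j e cx) <= clipped_rhs_bound).
  replace (rhs j e cx) with ((rhs j e cx - rhs j e (fun _ => 0)) + rhs j e (fun _ => 0)) by ring.
  eapply Rle_trans; [apply Rabs_triang|]. unfold clipped_rhs_bound.
  assert (Hdist : l1_dist 4 cx (fun _ => 0) <= 4 * box_radius).
  { apply (Rle_trans _ (INR 4 * box_radius)); [|simpl; lra]. apply l1_dist_le.
    intros k Hk. rewrite Rminus_0_r. apply Rabs_clip_box_le, Hk. }
  assert (Horigin : Rabs (rhs j e (fun _ => 0)) <= be4 * iM).
  { eapply Rle_trans; [apply rhs_at_origin|]. apply Rmult_le_compat_l; [exact Hbe4|].
    pose proof (infusion_ext_bounds s). rewrite Rabs_pos_eq; unfold e; lra. }
  assert (Hlip : Rabs (rhs j e cx - rhs j e (fun _ => 0))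
                 <= rhs_lip box_radius * (4 * box_radius)).
  { eapply Rle_trans.
    - apply rhs_lipschitz; [exact box_radius_nonneg|]. intros k Hk. split.
      + apply Rabs_clip_box_le, Hk.
      + rewrite Rabs_R0. exact box_radius_nonneg.
    - apply Rmult_le_compat_l; [exact (rhs_lip_nonneg _ box_radius_nonneg)|exact Hdist]. }
  lra.
Qed.

Lemma clipped_rhs_continuous_time j x z : continuous (fun s => clipped_rhs j s x) z.
Proof.
  apply (continuous_of_dominated _ (fun s => be4 * Rabs (infusion_ext s - infusion_ext z))).
  - intros s. apply rhs_infusion_sub.
  - apply (continuous_scal_r be4 (fun s => Rabs (infusion_ext s - infusion_ext z))).
    apply continuous_Rabs_comp.
    apply (continuous_minus infusion_ext (fun _ => infusion_ext z)); [|apply continuous_const].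
    apply continuous_Rmax0_comp, Hi.
  - rewrite Rminus_diag, Rabs_R0. ring.
Qed.

Lemma clipped_solution_exists :
  exists u : nat -> R -> R, forall j, (j < 4)%nat ->
    (forall z, continuous (u j) z) /\ u j 0 = a j /\
    forall t, 0 < t -> is_derive (u j) t (clipped_rhs j t (fun k => u k t)).
Proof.
  apply (exists_global_solution 4 clipped_rhs (rhs_lip box_radius) clipped_rhs_bound).
  - exact (rhs_lip_nonneg _ box_radius_nonneg).
  - unfold clipped_rhs_bound. pose proof (infusion_ext_bounds 0).
    pose proof (rhs_lip_nonneg _ box_radius_nonneg).
    pose proof box_radius_nonneg. apply Rplus_le_le_0_compat; apply Rmult_le_pos; lra.
  - intros j s x y _. apply clipped_rhs_lipschitz.
  - intros j s x _. apply clipped_rhs_bounded.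
  - intros j x z _. apply clipped_rhs_continuous_time.
Qed.

Lemma clipped_solution_in_box (u : nat -> R -> R) :
  (forall j, (j < 4)%nat ->
    (forall z, continuous (u j) z) /\ u j 0 = a j /\
    forall t, 0 < t -> is_derive (u j) t (clipped_rhs j t (fun k => u k t))) ->
  forall j t, (j < 4)%nat -> 0 <= t -> 0 <= u j t <= box_top j.
Proof.
  intros Hu j t Hj Ht. destruct (Hu j Hj) as (Hc & H0 & Hd).
  assert (Hclip : forall s k, 0 <= clip (box_top k) (u k s) <= box_top k)
    by (intros; apply clip_bounds, box_top_nonneg).
  apply (interval_invariant (u j) (fun s => clipped_rhs j s (fun k => u k s)));
    [exact Hc|exact Hd| | | |exact Ht].
  - rewrite H0. apply init_in_box, Hj.
  - intros s Hs Habove. apply (rhs_inward_top box_top iM);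
      [apply box_top_trapping|apply infusion_ext_bounds|intros k; apply Hclip| |exact Hj].
    apply clip_of_ge; [apply box_top_nonneg|lra].
  - intros s Hs Hbelow. apply rhs_inward_bottom;
      [apply infusion_ext_bounds|intros k; apply Hclip| |exact Hj].
    apply clip_of_le; [apply box_top_nonneg|lra].
Qed.

Lemma clipped_rhs_in_box j t x :
  0 < t -> (forall k, (k < 4)%nat -> 0 <= x k <= box_top k) -> clipped_rhs j t x = rhs j (i t) x.
Proof.
  intros Ht Hx. unfold clipped_rhs, infusion_ext. rewrite Rmax_right by lra.
  apply rhs_ext. intros k Hk. apply clip_id, Hx, Hk.
Qed.

Theorem model_existence :
  exists u1 u2 u3 u4 : R -> R,
    is_solution al1 al2 be2 be3 be4 de1 de2 de4 i (a 0%nat) (a 1%nat) (a 2%nat) (a 3%nat)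
      u1 u2 u3 u4 /\
    forall t, 0 <= t -> 0 <= u1 t /\ 0 <= u2 t /\ 0 <= u3 t /\ 0 <= u4 t.
Proof.
  destruct clipped_solution_exists as [u Hu].
  pose proof (clipped_solution_in_box u Hu) as Hbox.
  assert (Hcont : forall j, (j < 4)%nat -> cont_on_Rplus (u j))
    by (intros j Hj; apply cont_on_Rplus_of_continuous, Hu, Hj).
  assert (Hinit : forall j, (j < 4)%nat -> u j 0 = a j) by (intros j Hj; apply Hu, Hj).
  assert (Hder : forall j t, (j < 4)%nat -> 0 < t ->
                  is_derive (u j) t (rhs j (i t) (fun k => u k t))).
  { intros j t Hj Ht. rewrite <- clipped_rhs_in_box; [apply Hu; assumption|exact Ht|].
    intros k Hk. apply Hbox; [exact Hk|lra]. }
  exists (u 0%nat), (u 1%nat), (u 2%nat), (u 3%nat). split.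
  - refine (conj _ (conj _ (conj _ (conj _ (conj _ (conj _ (conj _ (conj _ _))))))));
      try (apply Hinit || apply Hcont; lia).
    intros t Ht. exact (conj (Hder 0%nat t ltac:(lia) Ht) (conj (Hder 1%nat t ltac:(lia) Ht)
                          (conj (Hder 2%nat t ltac:(lia) Ht) (Hder 3%nat t ltac:(lia) Ht)))).
  - intros t Ht. repeat split; apply Hbox; (lia || lra).
Qed.

End Existence.

Theorem model_uniqueness (i : R -> R) (a1 a2 a3 a4 : R) (u1 u2 u3 u4 v1 v2 v3 v4 : R -> R) :
  is_solution al1 al2 be2 be3 be4 de1 de2 de4 i a1 a2 a3 a4 u1 u2 u3 u4 ->
  is_solution al1 al2 be2 be3 be4 de1 de2 de4 i a1 a2 a3 a4 v1 v2 v3 v4 ->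
  forall t, 0 <= t -> u1 t = v1 t /\ u2 t = v2 t /\ u3 t = v3 t /\ u4 t = v4 t.
Proof.
  intros (Hu1 & Hu2 & Hu3 & Hu4 & Cu1 & Cu2 & Cu3 & Cu4 & Du)
         (Hv1 & Hv2 & Hv3 & Hv4 & Cv1 & Cv2 & Cv3 & Cv4 & Dv) t Ht.
  set (u := fun k s => vec4 (u1 s) (u2 s) (u3 s) (u4 s) k).
  set (v := fun k s => vec4 (v1 s) (v2 s) (v3 s) (v4 s) k).
  assert (Heq : forall k, (k < 4)%nat -> u k t = v k t).
  { intros k Hk. apply (solution_unique 4 _ u v (rhs_locally_lipschitz i)); [| |exact Hk|exact Ht].
    - intros k' Hk'. destruct k' as [|[|[|[|k']]]]; [| | | |lia]; cbn; repeat split;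
        (assumption || congruence).
    - intros j s Hj Hs. destruct (Du s Hs) as (Du1 & Du2 & Du3 & Du4).
      destruct (Dv s Hs) as (Dv1 & Dv2 & Dv3 & Dv4).
      destruct j as [|[|[|[|j]]]]; [| | | |lia]; split; assumption. }
  exact (conj (Heq 0%nat ltac:(lia)) (conj (Heq 1%nat ltac:(lia))
          (conj (Heq 2%nat ltac:(lia)) (Heq 3%nat ltac:(lia))))).
Qed.

End Model.

Theorem theorem2p1 (al1 al2 be2 be3 be4 de1 de2 de4 iM : R) (i : R -> R)
  (a1 a2 a3 a4 : R) :
  0 < al1 -> 0 < al2 -> 0 < be2 -> 0 < be3 -> 0 < be4 ->
  0 < de1 -> 0 < de2 -> 0 < de4 -> 0 < iM ->
  admissible_infusion iM i ->
  0 <= a1 -> 0 <= a2 -> 0 <= a3 -> 0 <= a4 ->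
  (exists u1 u2 u3 u4 : R -> R,
     is_solution al1 al2 be2 be3 be4 de1 de2 de4 i a1 a2 a3 a4 u1 u2 u3 u4 /\
     forall t, 0 <= t -> 0 <= u1 t /\ 0 <= u2 t /\ 0 <= u3 t /\ 0 <= u4 t) /\
  (forall u1 u2 u3 u4 v1 v2 v3 v4 : R -> R,
     is_solution al1 al2 be2 be3 be4 de1 de2 de4 i a1 a2 a3 a4 u1 u2 u3 u4 ->
     is_solution al1 al2 be2 be3 be4 de1 de2 de4 i a1 a2 a3 a4 v1 v2 v3 v4 ->
     forall t, 0 <= t -> u1 t = v1 t /\ u2 t = v2 t /\ u3 t = v3 t /\ u4 t = v4 t).
Proof.
  intros Hal1 Hal2 Hbe2 Hbe3 Hbe4 Hde1 Hde2 Hde4 _ Hi Ha1 Ha2 Ha3 Ha4. split.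
  - refine (model_existence al1 al2 be2 be3 be4 de1 de2 de4 _ _ _ _ _ _ _ _
              i iM (vec4 a1 a2 a3 a4) Hi _); [lra ..|intros [|[|[|k]]]; assumption].
  - intros u1 u2 u3 u4 v1 v2 v3 v4. apply model_uniqueness; lra.
Qed.
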